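(* Let $E/\mathbb{F}_q$ be a function field of genus $\mathfrak g$, $P_1,\dots,P_N,P_\infty$ distinct rational places, and $\lambda$ an integer with $\mathfrak g\le\lambda<N$. Set $t=1+\lfloor (N-\lambda+\mathfrak g-1)/2\rfloor$. Then there exist $\mathbf r\in\mathbb{F}_q^N$ and two distinct codewords $\mathbf c_1\ne\mathbf c_2$ of $\mathfrak C(\lambda P_\infty,\mathcal P)$ such that both $\mathbf r-\mathbf c_1$ and $\mathbf r-\mathbf c_2$ are $t$-bursts. In particular, no decoder can uniquely correct all burst errors of length $t$; at most $\lfloor (N-\lambda+\mathfrak g-1)/2\rfloor$ burst errors can be corrected deterministically.
   Context: $E/\mathbb{F}_q$ has full constant field $\mathbb{F}_q$. $\mathcal L(\lambda P_\infty)=\{f\in E^*:\nu_{P_\infty}(f)\ge-\lambda,\ \nu_Q(f)\ge0\ \forall Q\ne P_\infty\}\cup\{0\}$, $\mathcal P=\{P_1,\dots,P_N\}$, and $\mathfrak C(\lambda P_\infty,\mathcal P)=\{(f(P_1),\dots,f(P_N)):f\in\mathcal L(\lambda P_\infty)\}\subseteq\mathbb{F}_q^N$. A vector $\mathbf e\in\mathbb{F}_q^N$ is a $b$-burst if $\mathbf e=0$ or the indices $i\le j$ of its first and last nonzero entries satisfy $j-i<b$. *)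

From HB Require Import structures.
From mathcomp Require Import all_boot all_order all_algebra all_field.
Set Implicit Arguments. Unset Strict Implicit. Unset Printing Implicit Defensive.
Import Order.TTheory GRing.Theory Num.Theory.
Local Open Scope ring_scope.

Section FunctionField.
Variables (F : finFieldType) (E : fieldType) (iota : {rmorphism F -> E}).

(* E/F is an algebraic function field of one variable over F: E is a finite
   extension of the rational function field F(x) for some x transcendental
   over F (here: E is spanned over F(x) by finitely many elements). *)
Definition transcendental (x : E) : Prop :=
  forall p : {poly F}, p != 0 -> (map_poly iota p).[x] != 0.

Definition function_field : Prop :=
  exists x : E, transcendental x /\
  exists (n : nat) (b : 'I_n -> E), forall y : E,
    exists (p : 'I_n -> {poly F}) (q : {poly F}),
      q != 0 /\
      y * (map_poly iota q).[x] = \sum_(i < n) (map_poly iota (p i)).[x] * b i.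

Definition full_constant_field : Prop :=
  forall y : E, (exists p : {poly F}, p != 0 /\ (map_poly iota p).[y] = 0) ->
    exists a : F, y = iota a.

(* A place of E/F, given by its normalized discrete valuation v_P
   (with the convention v_P 0 = 0; the value at 0 is never used otherwise). *)
Definition is_place (v : E -> int) : Prop :=
  [/\ v 0 = 0,
      (forall x y, x != 0 -> y != 0 -> v (x * y) = v x + v y),
      (forall x y, x != 0 -> y != 0 -> x + y != 0 ->
         Num.min (v x) (v y) <= v (x + y)),
      (exists z, z != 0 /\ v z = 1)
    & (forall a, a != 0 -> v (iota a) = 0)].

Definition inO (v : E -> int) (x : E) : Prop := x = 0 \/ 0 <= v x.
Definition inM (v : E -> int) (x : E) : Prop := x = 0 \/ 0 < v x.

(* deg P = [O_P/P : F] = d *)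
Definition place_degree (v : E -> int) (d : nat) : Prop :=
  exists b : 'I_d -> E,
    [/\ (forall i, inO v (b i)),
        (forall a : 'I_d -> F,
            inM v (\sum_(i < d) iota (a i) * b i) -> forall i, a i = 0)
      & (forall x, inO v x ->
            exists a : 'I_d -> F, inM v (x - \sum_(i < d) iota (a i) * b i))].

Definition rational_place (v : E -> int) : Prop := is_place v /\ place_degree v 1.

(* residue class of x in O_P/P = F at a rational place: x(P) = a *)
Definition evals_to (v : E -> int) (x : E) (a : F) : Prop :=
  inO v x /\ inM v (x - iota a).

Definition has_dim (S : E -> Prop) (n : nat) : Prop :=
  exists b : 'I_n -> E,
    [/\ (forall i, S (b i)),
        (forall a : 'I_n -> F, \sum_(i < n) iota (a i) * b i = 0 -> forall i, a i = 0)
      & (forall x, S x -> exists a : 'I_n -> F, x = \sum_(i < n) iota (a i) * b i)].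

(* Riemann-Roch space L(A) of the divisor A = sum_i m_i P_i
   (the P_i pairwise distinct places) *)
Definition LRR (k : nat) (P : 'I_k -> E -> int) (m : 'I_k -> int) (x : E) : Prop :=
  x = 0 \/
  forall w, is_place w ->
    (forall i, w = P i -> - m i <= w x) /\ ((forall i, w <> P i) -> 0 <= w x).

Definition divisor_ok (k : nat) (P : 'I_k -> E -> int) (d : 'I_k -> nat) : Prop :=
  [/\ forall i, is_place (P i), injective P & forall i, place_degree (P i) (d i)].

(* g is the genus: g = max_A (deg A - l(A) + 1) *)
Definition is_genus (g : nat) : Prop :=
  (forall k (P : 'I_k -> E -> int) (m : 'I_k -> int) (d : 'I_k -> nat) (n : nat),
     divisor_ok P d -> has_dim (LRR P m) n ->
     \sum_(i < k) m i * (d i)%:Z + 1 - n%:Z <= g%:Z)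
  /\
  (exists k (P : 'I_k -> E -> int) (m : 'I_k -> int) (d : 'I_k -> nat) (n : nat),
     [/\ divisor_ok P d, has_dim (LRR P m) n &
         \sum_(i < k) m i * (d i)%:Z + 1 - n%:Z = g%:Z]).

Definition L_multiple (Pinf : E -> int) (lam : nat) (f : E) : Prop :=
  f = 0 \/
  ((- (lam%:Z) <= Pinf f) /\ forall w, is_place w -> w <> Pinf -> 0 <= w f).

Definition AG_code (N : nat) (P : 'I_N -> E -> int) (Pinf : E -> int) (lam : nat)
  (c : 'rV[F]_N) : Prop :=
  exists f, L_multiple Pinf lam f /\ forall i, evals_to (P i) f (c ord0 i).

End FunctionField.

Definition is_burst (F : fieldType) (N b : nat) (e : 'rV[F]_N) : Prop :=
  e = 0 \/
  exists i j : 'I_N,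
    [/\ e ord0 i != 0, e ord0 j != 0,
        (forall k : 'I_N, e ord0 k != 0 -> (i <= k <= j)%N)
      & (j - i < b)%N].

(* Put w = N - lam + g.  Riemann's inequality l(A) >= deg A + 1 - g (half of the
   definition of the genus) together with l(A + P) <= l(A) + deg P (the residue
   map at P) gives a nonzero f in L(lam P_inf - sum_{j >= w} P_j), and shows that
   L(lam P_inf - sum_j P_j) = 0.  Hence the codeword c of f is nonzero and
   supported on the first w <= 2t coordinates, and the word that agrees with c on
   the first t coordinates and vanishes elsewhere is within a t-burst of both 0
   and c. *)

From HB Require Import structures.
From mathcomp Require Import all_boot all_order all_algebra all_field zify ring.
From Stdlib Require Import ClassicalEpsilon Classical.
Import Order.TTheory GRing.Theory Num.Theory.
Set Implicit Arguments. Unset Strict Implicit. Unset Printing Implicit Defensive.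
Local Open Scope ring_scope.

Definition decb (P : Prop) : bool :=
  if excluded_middle_informative P then true else false.

Lemma decbP (P : Prop) : reflect P (decb P).
Proof. by rewrite /decb; case: excluded_middle_informative => h; constructor. Qed.

Section Valuation.
Variables (F : finFieldType) (E : fieldType) (iota : {rmorphism F -> E}).

Definition lincomb n (b : 'I_n -> E) (a : 'I_n -> F) : E := \sum_i iota (a i) * b i.

Lemma lincombD n (b : 'I_n -> E) a1 a2 :
  lincomb b (fun i => a1 i + a2 i) = lincomb b a1 + lincomb b a2.
Proof. by rewrite /lincomb -big_split; apply: eq_bigr => i _; rewrite rmorphD mulrDl. Qed.

Lemma lincombZ n (b : 'I_n -> E) c a :
  lincomb b (fun i => c * a i) = iota c * lincomb b a.
Proof. by rewrite /lincomb mulr_sumr; apply: eq_bigr => i _; rewrite rmorphM mulrA. Qed.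

Lemma lincombN n (b : 'I_n -> E) a : lincomb b (fun i => - a i) = - lincomb b a.
Proof. by rewrite /lincomb -sumrN; apply: eq_bigr => i _; rewrite rmorphN mulNr. Qed.

Lemma lincomb0 n (b : 'I_n -> E) : lincomb b (fun _ => 0) = 0.
Proof. by rewrite /lincomb big1 // => i _; rewrite rmorph0 mul0r. Qed.

Variable v : E -> int.
Hypothesis hv : is_place iota v.

Lemma val0 : v 0 = 0. Proof. by case: hv. Qed.

Lemma valM x y : x != 0 -> y != 0 -> v (x * y) = v x + v y.
Proof. by case: hv => _ h _ _ _; apply: h. Qed.

Lemma val_add x y : x != 0 -> y != 0 -> x + y != 0 -> Num.min (v x) (v y) <= v (x + y).
Proof. by case: hv => _ _ h _ _; apply: h. Qed.

Lemma val_const a : a != 0 -> v (iota a) = 0.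
Proof. by case: hv => _ _ _ _ h; apply: h. Qed.

Lemma val1 : v 1 = 0.
Proof. by rewrite -(rmorph1 iota) val_const ?oner_neq0. Qed.

Lemma valV x : x != 0 -> v x^-1 = - v x.
Proof. by move=> x0; have := valM x0 (invr_neq0 x0); rewrite mulfV // val1; lia. Qed.

Lemma valX x n : x != 0 -> v (x ^+ n) = n%:Z * v x.
Proof.
move=> x0; elim: n => [|n IH]; first by rewrite expr0 val1 mul0r.
by rewrite exprS valM ?expf_neq0 // IH; lia.
Qed.

Lemma valXz x (k : int) : x != 0 -> v (x ^ k) = k * v x.
Proof.
move=> x0; case: k => n; first by rewrite -exprnP valX.
change (x ^ Negz n) with (x ^+ n.+1)^-1.
by rewrite valV ?expf_neq0 // valX // NegzE; lia.
Qed.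

Lemma valZ a x : a != 0 -> x != 0 -> v (iota a * x) = v x.
Proof. by move=> a0 x0; rewrite valM ?fmorph_eq0 // val_const // add0r. Qed.

Lemma inM_add x y : inM v x -> inM v y -> inM v (x + y).
Proof.
move=> [->|hx]; first by rewrite add0r.
move=> [->|hy]; first by rewrite addr0; right.
have [e|e] := eqVneq (x + y) 0; first by left.
have x0 : x != 0 by apply: contraTneq hx => ->; rewrite val0.
have y0 : y != 0 by apply: contraTneq hy => ->; rewrite val0.
by right; apply: lt_le_trans (val_add x0 y0 e); rewrite lt_min hx hy.
Qed.

Lemma inO_add x y : inO v x -> inO v y -> inO v (x + y).
Proof.
move=> [->|hx]; first by rewrite add0r.
move=> [->|hy]; first by rewrite addr0; right.
have [e|e] := eqVneq (x + y) 0; first by left.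
have [->|x0] := eqVneq x 0; first by rewrite add0r; right.
have [->|y0] := eqVneq y 0; first by rewrite addr0; right.
by right; apply: le_trans (val_add x0 y0 e); rewrite le_min hx hy.
Qed.

Lemma inM_scale a x : inM v x -> inM v (iota a * x).
Proof.
have [->|a0] := eqVneq a 0; first by rewrite rmorph0 mul0r; left.
move=> [->|hx]; first by rewrite mulr0; left.
have x0 : x != 0 by apply: contraTneq hx => ->; rewrite val0.
by right; rewrite valZ.
Qed.

Lemma inO_scale a x : inO v x -> inO v (iota a * x).
Proof.
have [->|a0] := eqVneq a 0; first by rewrite rmorph0 mul0r; left.
move=> [->|hx]; first by rewrite mulr0; left.
have [->|x0] := eqVneq x 0; first by rewrite mulr0; left.
by right; rewrite valZ.
Qed.

Lemma inM_sub x y : inM v x -> inM v y -> inM v (x - y).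
Proof. by move=> hx hy; rewrite -mulN1r -(rmorphN1 iota) in hy *; apply/inM_add/inM_scale. Qed.

Lemma inM_sum n (f : 'I_n -> E) : (forall i, inM v (f i)) -> inM v (\sum_i f i).
Proof. by move=> h; elim/big_ind: _ => //; [left|apply: inM_add]. Qed.

Lemma inM_inO x : inM v x -> inO v x.
Proof. by case=> [->|h]; [left|right; lia]. Qed.

Lemma inO1 : inO v 1. Proof. by right; rewrite val1. Qed.

Lemma const_notin_M a : a != 0 -> ~ inM v (iota a).
Proof. by move=> a0 [/eqP|]; [rewrite fmorph_eq0 (negPf a0)|rewrite val_const]. Qed.

End Valuation.

Section Residue.
Variables (F : finFieldType) (E : fieldType) (iota : {rmorphism F -> E}).
Variables (v : E -> int) (d : nat) (b : 'I_d -> E).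
Hypothesis hv : is_place iota v.
Hypothesis b_free : forall a, inM v (lincomb iota b a) -> forall i, a i = 0.
Hypothesis b_span : forall x, inO v x -> exists a, inM v (x - lincomb iota b a).

(* The coordinates, in the basis [b] of O_v/M_v over F, of the class of x;
   junk value 0 when x is not in O_v. *)
Definition residue (x : E) : 'I_d -> F :=
  match excluded_middle_informative (exists a, inM v (x - lincomb iota b a)) with
  | left h => proj1_sig (constructive_indefinite_description _ h)
  | right _ => fun _ => 0
  end.

Lemma residueP x : inO v x -> inM v (x - lincomb iota b (residue x)).
Proof.
move=> hx; rewrite /residue; case: excluded_middle_informative => [h|nh].
  by case: constructive_indefinite_description.
by case: nh; apply: b_span.
Qed.

Lemma residue_uniq x a a' :
  inM v (x - lincomb iota b a) -> inM v (x - lincomb iota b a') -> forall i, a i = a' i.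
Proof.
move=> h h' i; apply/eqP; rewrite -subr_eq0; apply/eqP.
apply: (b_free (a := fun i => a i - a' i)).
have -> : lincomb iota b (fun i => a i - a' i) =
          (x - lincomb iota b a') - (x - lincomb iota b a).
  by rewrite lincombD lincombN; ring.
exact: (inM_sub hv).
Qed.

Lemma residueD x y : inO v x -> inO v y ->
  forall i, residue (x + y) i = residue x i + residue y i.
Proof.
move=> hx hy; apply: (residue_uniq (residueP (inO_add hv hx hy))).
have -> : x + y - lincomb iota b (fun i => residue x i + residue y i) =
   (x - lincomb iota b (residue x)) + (y - lincomb iota b (residue y)).
  by rewrite lincombD opprD addrACA.
by apply: (inM_add hv) => //; apply: residueP.
Qed.

Lemma residueZ c x : inO v x -> forall i, residue (iota c * x) i = c * residue x i.
Proof.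
move=> hx; apply: (residue_uniq (residueP (inO_scale hv c hx))).
by rewrite lincombZ -mulrBr; apply: (inM_scale hv) => //; apply: residueP.
Qed.

Lemma residue_inM x : inM v x -> forall i, residue x i = 0.
Proof.
move=> hx; apply: (residue_uniq (a' := fun _ => 0) (residueP (inM_inO hx))).
by rewrite lincomb0 subr0.
Qed.

Lemma residue_eq0 x : inO v x -> (forall i, residue x i = 0) -> inM v x.
Proof.
move=> hx h; have := residueP hx.
suff -> : lincomb iota b (residue x) = 0 by rewrite subr0.
by rewrite /lincomb big1 // => i _; rewrite h rmorph0 mul0r.
Qed.

End Residue.

Section RationalPlace.
Variables (F : finFieldType) (E : fieldType) (iota : {rmorphism F -> E}).
Variable v : E -> int.
Hypothesis hv : rational_place iota v.

Let hpl : is_place iota v. Proof. by case: hv. Qed.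

Lemma one_notin_M : ~ inM v 1.
Proof. by rewrite -(rmorph1 iota); apply: const_notin_M; rewrite ?oner_neq0. Qed.

Lemma rational_place_degree d : place_degree iota v d -> d = 1%N.
Proof.
case: hv => _ [b1 [_ _ hS1]] [b [hO hI hS]].
case: d b hO hI hS => [|[|d]] b hO hI hS //; exfalso.
  apply: one_notin_M; have [a] := hS 1 (inO1 hpl).
  by rewrite big_ord0 subr0.
(* O_v/M_v is spanned by the class of [b1 ord0], so two classes are dependent. *)
pose al i := residue iota v b1 (b i) ord0.
have hal i : inM v (b i - iota (al i) * b1 ord0).
  by have := residueP hS1 (hO i); rewrite /lincomb big_ord1.
have relation (a : 'I_d.+2 -> F) : \sum_i a i * al i = 0 -> inM v (\sum_i iota (a i) * b i).
  move=> ha; have -> : \sum_i iota (a i) * b i =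
     \sum_i iota (a i) * (b i - iota (al i) * b1 ord0) + iota (\sum_i a i * al i) * b1 ord0.
    rewrite rmorph_sum mulr_suml -big_split /=; apply: eq_bigr => i _.
    by rewrite rmorphM mulrBr -mulrA subrK.
  by rewrite ha rmorph0 mul0r addr0; apply: (inM_sum hpl) => i; apply: (inM_scale hpl).
pose i0 : 'I_d.+2 := ord0; pose i1 : 'I_d.+2 := lift ord0 ord0.
have [z0|nz0] := eqVneq (al i0) 0.
  pose a i := if i == i0 then 1 else 0 : F.
  suff /relation/hI/(_ i0)/eqP : \sum_i a i * al i = 0 by rewrite /a eqxx oner_eq0.
  rewrite (bigD1 i0) //= big1 ?addr0 /a ?eqxx ?z0 ?mulr0 // => i /negPf ->.
  by rewrite mul0r.
pose a i := if i == i0 then al i1 else if i == i1 then - al i0 else 0.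
suff /relation/hI/(_ i1)/eqP : \sum_i a i * al i = 0 by rewrite /a /= oppr_eq0 (negPf nz0).
rewrite (bigD1 i0) // (bigD1 i1) //= big1 ?addr0 /a /=; first by ring.
by move=> i /andP [/negPf h1 /negPf h2]; rewrite h1 h2 mul0r.
Qed.

Lemma evals_to_exists x : inO v x -> exists a, evals_to iota v x a.
Proof.
case: hv => _ [b1 [_ _ hS1]] hx.
have [e] := hS1 1 (inO1 hpl); have [a] := hS1 x hx.
rewrite !big_ord1; move: (e ord0) (a ord0) => {}e {}a ha he.
have e0 : e != 0.
  by apply: contra_notN one_notin_M => /eqP e0; move: he; rewrite e0 rmorph0 mul0r subr0.
have hb : inM v (b1 ord0 - iota e^-1).
  have -> : b1 ord0 - iota e^-1 = iota (- e^-1) * (1 - iota e * b1 ord0).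
    by rewrite rmorphN fmorphV; field; rewrite fmorph_eq0.
  exact: (inM_scale hpl).
exists (a * e^-1); split => //.
have -> : x - iota (a * e^-1) = (x - iota a * b1 ord0) + iota a * (b1 ord0 - iota e^-1).
  by rewrite mulrBr rmorphM addrA subrK.
by apply: (inM_add hpl) => //; apply: (inM_scale hpl).
Qed.

Lemma evals_to_inM x a : evals_to iota v x a -> inM v x -> a = 0.
Proof.
move=> [_ h] hx; apply/eqP; apply: contraT => a0; exfalso; apply: (const_notin_M hpl a0).
by rewrite -[iota a](subKr x); apply: (inM_sub hpl).
Qed.

End RationalPlace.

Section FiniteDimension.
Variables (F : finFieldType) (E : fieldType) (iota : {rmorphism F -> E}).
Local Notation lincomb := (lincomb iota).

Definition subspace (S : E -> Prop) :=
  [/\ S 0, (forall x y, S x -> S y -> S (x + y)) & (forall a x, S x -> S (iota a * x))].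

Definition spans (S : E -> Prop) n := exists b : 'I_n -> E,
  (forall i, S (b i)) /\ forall x, S x -> exists a, x = lincomb b a.

Definition indep (S : E -> Prop) n := exists b : 'I_n -> E,
  (forall i, S (b i)) /\ forall a, lincomb b a = 0 -> forall i, a i = 0.

Lemma has_dim_spans S n : has_dim iota S n -> spans S n.
Proof. by move=> [b [h1 _ h3]]; exists b. Qed.

Lemma spans_ext S S' n : (forall x, S x <-> S' x) -> spans S n -> spans S' n.
Proof. by move=> e [b [h1 h2]]; exists b; split=> [i|x /e]; [apply/e|]; auto. Qed.

Lemma has_dim_ext S S' n : (forall x, S x <-> S' x) -> has_dim iota S n -> has_dim iota S' n.
Proof. by move=> e [b [h1 h2 h3]]; exists b; split=> [i|//|x /e]; [apply/e|]; auto. Qed.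

Definition rcons_fun T m (b : 'I_m -> T) (w : T) (i : 'I_m.+1) : T :=
  if insub (val i) is Some j then b j else w.

Lemma lincomb_rcons m (b : 'I_m -> E) w a c :
  lincomb (rcons_fun b w) (rcons_fun a c) = lincomb b a + iota c * w.
Proof.
rewrite /lincomb big_ord_recr /= /rcons_fun insubF ?ltnn //; congr (_ + _).
apply: eq_bigr => i _; case: insubP => [j _ /val_inj ->|] //=.
by rewrite ltn_ord.
Qed.

(* Each of the [d] linear forms [phi i] cuts down the dimension by at most one. *)
Lemma spans_common_kernel (V W : E -> Prop) (phi : nat -> E -> F) d n :
  subspace W -> (forall x, V x -> W x) ->
  (forall i, (i < d)%N -> forall x y, W x -> W y -> phi i (x + y) = phi i x + phi i y) ->
  (forall i, (i < d)%N -> forall a x, W x -> phi i (iota a * x) = a * phi i x) ->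
  (forall x, W x -> (V x <-> forall i, (i < d)%N -> phi i x = 0)) ->
  spans V n -> spans W (d + n).
Proof.
elim: d W => [|d IH] W [W0 WD WZ] VW hD hZ kV hV.
  case: hV => b [hb1 hb2]; exists b; split=> [i|x hx]; first exact: VW.
  by apply: hb2; apply/(kV _ hx).
pose W' x := W x /\ phi d x = 0.
have phi0 : phi d 0 = 0.
  by apply: (@addrI _ (phi d 0)); rewrite addr0 -hD // addr0.
have [b [hb1 hb2]] : spans W' (d + n).
  apply: IH => //.
  - split; first by split.
      by move=> x y [hx px] [hy py]; split; [apply: WD|rewrite hD // px py addr0].
    by move=> a x [hx px]; split; [apply: WZ|rewrite hZ // px mulr0].
  - by move=> x hx; split; [apply: VW|apply: (kV _ (VW _ hx)).1].
  - by move=> i hi x y [hx _] [hy _]; apply: hD => //; apply: ltnW.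
  - by move=> i hi a x [hx _]; apply: hZ => //; apply: ltnW.
  - move=> x [hx px]; rewrite kV //; split=> h i hi; first by apply/h/ltnW.
    by move: hi; rewrite ltnS leq_eqVlt => /orP [/eqP -> //|]; apply: h.
have [w [hw hwp]] : exists w, W w /\ forall x, W x -> exists c, W' (x + iota c * w).
  case: (classic (exists w, W w /\ phi d w != 0)) => [[w [hw pw]]|nw].
    exists w; split => // x hx; exists (- (phi d x / phi d w)); split.
      by apply: WD => //; apply: WZ.
    by rewrite hD ?hZ //; [rewrite mulNr divfK // subrr | apply: WZ].
  exists 0; split => // x hx; exists 0; rewrite mulr0 addr0; split => //.
  by apply: NNPP => h; apply: nw; exists x; split => //; apply/eqP.
exists (rcons_fun b w); split.
  by move=> i; rewrite /rcons_fun; case: insub => [j|] //; case: (hb1 j).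
move=> x hx; have [c hc] := hwp x hx; have [a ha] := hb2 _ hc.
by exists (rcons_fun a (- c)); rewrite lincomb_rcons -ha rmorphN mulNr addrK.
Qed.

Lemma spans_has_dim S n : subspace S -> spans S n -> exists2 n', (n' <= n)%N & has_dim iota S n'.
Proof.
move=> sS; elim: n => [|n IH] [b [hb1 hb2]].
  by exists 0%N => //; exists b; split => // a _ [].
case: (classic (forall a, lincomb b a = 0 -> forall i, a i = 0)) => hi.
  by exists n.+1 => //; exists b.
have [a [ha [i ai]]] : exists a, lincomb b a = 0 /\ exists i, a i != 0.
  apply: NNPP => h; apply: hi => a ha i; apply/eqP; apply: NNPP => ai.
  by apply: h; exists a; split => //; exists i; apply/negP.
have [n' hn' hd] : exists2 n', (n' <= n)%N & has_dim iota S n'.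
  apply: IH; exists (fun j => b (lift i j)); split => // x hx.
  have [c hc] := hb2 x hx.
  exists (fun j => c (lift i j) - c i / a i * a (lift i j)).
  move: ha; rewrite hc /lincomb (bigD1_ord i) //= (bigD1_ord i) //= => ha.
  have e : iota (a i) * b i = - \sum_(j < n) iota (a (lift i j)) * b (lift i j).
    by apply/eqP; rewrite -addr_eq0 ha.
  have -> : iota (c i) * b i = iota (c i / a i) * (iota (a i) * b i).
    by rewrite mulrA -rmorphM divfK.
  rewrite e mulrN -mulNr mulr_sumr -big_split /=; apply: eq_bigr => j _.
  by rewrite rmorphB rmorphM; ring.
by exists n' => //; apply: leqW.
Qed.

(* An independent family lying in the span of [n] vectors has at most [n]
   members: otherwise the coordinate matrix has a nonzero left kernel. *)
Lemma indep_spans_leq S m n : indep S m -> spans S n -> (m <= n)%N.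
Proof.
move=> [u [hu1 hu2]] [b [hb1 hb2]]; rewrite leqNgt; apply/negP => lt.
have hA i : exists a, u i = lincomb b a by apply: hb2.
pose A i := proj1_sig (constructive_indefinite_description _ (hA i)).
have hAi i : u i = lincomb b (A i).
  by rewrite /A; case: constructive_indefinite_description.
pose Am : 'M[F]_(m, n) := \matrix_(i, j) A i j.
have [r hr] : exists r, row r (kermx Am) != 0.
  have : (\rank (kermx Am) != 0)%N by rewrite mxrank_ker; have := rank_leq_col Am; lia.
  rewrite mxrank_eq0 => /eqP nz; apply: NNPP => h; apply: nz.
  by apply/row_matrixP => r; rewrite row0; apply/eqP; apply: NNPP => h'; apply: h; exists r; apply/negP.
pose c := row r (kermx Am).
have cA : c *m Am = 0 by rewrite -row_mul mulmx_ker row0.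
have [j hj] : exists j, c 0 j != 0.
  apply: NNPP => h; move: hr => /eqP; apply; apply/rowP => j; rewrite [RHS]mxE.
  by apply/eqP; apply: NNPP => h'; apply: h; exists j; apply/negP.
move/eqP: hj; apply; apply: (hu2 (fun i => c 0 i) _ j).
rewrite /lincomb (eq_bigr (fun i => iota (c 0 i) * lincomb b (A i))); last first.
  by move=> i _; rewrite hAi.
rewrite /lincomb; under eq_bigr do rewrite mulr_sumr.
rewrite exchange_big /= big1 // => k _.
have : (c *m Am) 0 k = 0 by rewrite cA mxE.
rewrite mxE => e.
rewrite (eq_bigr (fun i => iota (c 0 i * Am i k) * b k)); last first.
  by move=> i _; rewrite /Am [X in _ = iota (_ * X) * _]mxE rmorphM mulrA.
by rewrite -mulr_suml -rmorph_sum e rmorph0 mul0r.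
Qed.

End FiniteDimension.

Section RiemannRochSpace.
Variables (F : finFieldType) (E : fieldType) (iota : {rmorphism F -> E}).
Local Notation place := (is_place iota).

Definition place_ind (p w : E -> int) : int := if decb (w = p) then 1 else 0.

Lemma place_ind_id p : place_ind p p = 1.
Proof. by rewrite /place_ind; case: decbP. Qed.

Lemma place_ind_ne p w : w <> p -> place_ind p w = 0.
Proof. by rewrite /place_ind; case: decbP. Qed.

Lemma place_indC p w : place_ind p w = place_ind w p.
Proof. by rewrite /place_ind; case: decbP => [->|h]; case: decbP => // e; case: h. Qed.

(* A divisor is represented by its multiplicity function on places. *)
Definition Lspace (D : (E -> int) -> int) (x : E) : Prop :=
  x = 0 \/ forall w, place w -> - D w <= w x.

Lemma Lspace_subspace D : subspace iota (Lspace D).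
Proof.
split; first by left.
  move=> x y [->|hx]; first by rewrite add0r.
  move=> [->|hy]; first by rewrite addr0; right.
  have [e|e] := eqVneq (x + y) 0; first by left.
  have [->|x0] := eqVneq x 0; first by rewrite add0r; right.
  have [->|y0] := eqVneq y 0; first by rewrite addr0; right.
  by right => w hw; apply: le_trans (val_add hw x0 y0 e); rewrite le_min hx ?hy.
move=> a x [->|hx]; first by rewrite mulr0; left.
have [->|a0] := eqVneq a 0; first by rewrite rmorph0 mul0r; left.
have [->|x0] := eqVneq x 0; first by rewrite mulr0; left.
by right => w hw; rewrite (valZ hw a0 x0); apply: hx.
Qed.

Lemma Lspace_mono D D' x : (forall w, place w -> D w <= D' w) -> Lspace D x -> Lspace D' x.
Proof. by move=> h [->|hx]; [left|right => w hw; have := h w hw; have := hx w hw; lia]. Qed.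

Lemma Lspace_ext D D' x : (forall w, place w -> D w = D' w) -> Lspace D x <-> Lspace D' x.
Proof. by move=> h; split; apply: Lspace_mono => w hw; rewrite h. Qed.

Lemma LspaceM D1 D2 f x :
  Lspace D1 f -> Lspace D2 x -> Lspace (fun w => D1 w + D2 w) (f * x).
Proof.
move=> [->|hf]; first by rewrite mul0r; left.
move=> [->|hx]; first by rewrite mulr0; left.
have [->|f0] := eqVneq f 0; first by rewrite mul0r; left.
have [->|x0] := eqVneq x 0; first by rewrite mulr0; left.
by right => w hw; rewrite (valM hw f0 x0); have := hf w hw; have := hx w hw; lia.
Qed.

(* L(D) is the common kernel in L(D + p) of the d residue coordinates of
   z^k x at p, where z is a uniformizer and k = D(p) + 1. *)
Lemma spans_Lspace_add_place D p d n : place p -> place_degree iota p d ->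
  spans iota (Lspace D) n -> spans iota (Lspace (fun w => D w + place_ind p w)) (d + n).
Proof.
move=> hp [b [_ hbI hbS]] hV.
have [z [z0 z1]] : exists z, z != 0 /\ p z = 1 by case: hp.
pose k : int := D p + 1.
pose phi i x := if @insub _ _ 'I_d i is Some j then residue iota p b (z ^ k * x) j else 0.
have phiE i (h : (i < d)%N) x : phi i x = residue iota p b (z ^ k * x) (Ordinal h).
  rewrite /phi; case: insubP => [j _ hj|]; last by rewrite h.
  by congr residue; apply: val_inj.
have valzk x : x != 0 -> p (z ^ k * x) = k + p x.
  by move=> x0; rewrite (valM hp (expfz_neq0 k z0) x0) (valXz hp k z0) z1 mulr1.
have inO_zk x : Lspace (fun w => D w + place_ind p w) x -> inO p (z ^ k * x).
  move=> [->|hx]; first by rewrite mulr0; left.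
  have [->|x0] := eqVneq x 0; first by rewrite mulr0; left.
  by right; rewrite valzk //; have := hx p hp; rewrite place_ind_id /k; lia.
apply: (spans_common_kernel (phi := phi)) hV.
- exact: Lspace_subspace.
- by move=> x; apply: Lspace_mono => w _; rewrite /place_ind; case: decbP; lia.
- by move=> i hi x y hx hy; rewrite !(phiE i hi) mulrDr (residueD hp hbI hbS (inO_zk _ hx) (inO_zk _ hy)).
- by move=> i hi a x hx; rewrite !(phiE i hi) mulrCA (residueZ hp hbI hbS _ (inO_zk _ hx)).
move=> x hx; split=> [hxD i hi|h0].
  rewrite (phiE i hi); apply: (residue_inM hp hbI hbS).
  case: hxD => [->|hxD]; first by rewrite mulr0; left.
  have [->|x0] := eqVneq x 0; first by rewrite mulr0; left.
  by right; rewrite valzk //; have := hxD p hp; rewrite /k; lia.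
have hM : inM p (z ^ k * x).
  apply: (residue_eq0 hbS (inO_zk _ hx)) => i; have := h0 i (ltn_ord i).
  by rewrite (phiE _ (ltn_ord i)); have -> : Ordinal (ltn_ord i) = i by apply: val_inj.
case: hx => [->|hx]; first by left.
have [->|x0] := eqVneq x 0; first by left.
right => w hw; have [->|ne] := classic (w = p).
  case: hM => [/eqP|]; first by rewrite mulf_eq0 expfz_eq0 (negPf z0) (negPf x0) andbF.
  by rewrite valzk // /k; lia.
by have := hx w hw; rewrite place_ind_ne // addr0.
Qed.

Lemma spans_Lspace_addn D p d c n : place p -> place_degree iota p d ->
  spans iota (Lspace D) n ->
  spans iota (Lspace (fun w => D w + c%:Z * place_ind p w)) (c * d + n).
Proof.
move=> hp hd hV; elim: c => [|c IH].
  by apply: spans_ext hV => x; apply: Lspace_ext => w _; rewrite mul0r addr0.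
rewrite mulSn -addnA; apply: spans_ext (spans_Lspace_add_place hp hd IH) => x.
by apply: Lspace_ext => w _; rewrite -addn1 PoszD mulrDl mul1r addrA.
Qed.

Lemma spans_Lspace_add_sum (I : Type) (r : seq I) (p : I -> E -> int) (dg : I -> nat)
    (c : I -> nat) D n :
  (forall i, place (p i) /\ place_degree iota (p i) (dg i)) -> spans iota (Lspace D) n ->
  spans iota (Lspace (fun w => D w + \sum_(i <- r) (c i)%:Z * place_ind (p i) w))
        (\sum_(i <- r) c i * dg i + n).
Proof.
move=> hpd hV; elim: r => [|i r IH].
  by rewrite big_nil; apply: spans_ext hV => x; apply: Lspace_ext => w _; rewrite big_nil addr0.
have [hp hd] := hpd i; rewrite big_cons -addnA.
apply: spans_ext (spans_Lspace_addn (c i) hp hd IH) => x.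
by apply: Lspace_ext => w _; rewrite big_cons; ring.
Qed.

Lemma Lspace_mul_indep D1 D2 f n : f != 0 -> Lspace D1 f ->
  has_dim iota (Lspace D2) n -> indep iota (Lspace (fun w => D1 w + D2 w)) n.
Proof.
move=> f0 hf [b [hb hfree _]]; exists (fun i => f * b i); split=> [i|a ha].
  exact: LspaceM.
apply: hfree; have : f * lincomb iota b a = 0.
  by rewrite -ha /lincomb mulr_sumr; apply: eq_bigr => i _; rewrite mulrCA.
by move/eqP; rewrite mulf_eq0 (negPf f0) => /eqP.
Qed.

Definition divisor K (Q : 'I_K -> E -> int) (m : 'I_K -> int) w : int :=
  \sum_j m j * place_ind (Q j) w.

Lemma divisor_at K (Q : 'I_K -> E -> int) m j : injective Q -> divisor Q m (Q j) = m j.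
Proof.
move=> iQ; rewrite /divisor (bigD1 j) //= place_ind_id mulr1 big1 ?addr0 // => i ij.
by rewrite place_ind_ne ?mulr0 // => /iQ e; move: ij; rewrite e eqxx.
Qed.

Lemma divisor_out K (Q : 'I_K -> E -> int) m w : (forall j, w <> Q j) -> divisor Q m w = 0.
Proof. by move=> h; rewrite /divisor big1 // => i _; rewrite place_ind_ne ?mulr0. Qed.

Lemma LRR_Lspace K (Q : 'I_K -> E -> int) m x : injective Q ->
  LRR iota Q m x <-> Lspace (divisor Q m) x.
Proof.
move=> iQ; split=> [[->|h]|[->|h]]; [by left| |by left|].
  right => w hw; have [hj hn] := h w hw.
  case: (classic (exists j, w = Q j)) => [[j e]|nj].
    by rewrite e divisor_at // -e; apply: hj.
  by rewrite divisor_out ?oppr0 => [|j e]; [apply: hn => j e|]; apply: nj; exists j.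
right => w hw; split=> [j e|hn]; have := h w hw; first by rewrite e divisor_at.
by rewrite divisor_out // oppr0.
Qed.

End RiemannRochSpace.

Section MergeDivisors.
Variables (F : finFieldType) (E : fieldType) (iota : {rmorphism F -> E}).
Local Notation place := (is_place iota).
Variables (k K : nat) (Q : 'I_k -> E -> int) (d : 'I_k -> nat) (R : 'I_K -> E -> int).
Variables (m : 'I_k -> int) (c : 'I_K -> int).
Hypothesis Q_ok : divisor_ok iota Q d.
Hypothesis R_inj : injective R.
Hypothesis R_rat : forall i, rational_place iota (R i).

(* Q followed by the places of R that are not already among those of Q. *)
Definition R_new := [pred i : 'I_K | decb (forall j, R i <> Q j)].
Local Notation K' := #|R_new|.

Definition merged_place (t : 'I_(k + K')) :=
  match split t with inl j => Q j | inr s => R (enum_val s) end.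
Definition merged_mult (t : 'I_(k + K')) :=
  match split t with
  | inl j => m j + \sum_i c i * place_ind (R i) (Q j)
  | inr s => c (enum_val s)
  end.
Definition merged_deg (t : 'I_(k + K')) :=
  match split t with inl j => d j | inr _ => 1%N end.

Let split_lshift (j : 'I_k) : split (lshift K' j) = inl j := unsplitK (inl j).
Let split_rshift (s : 'I_K') : split (rshift k s) = inr s := unsplitK (inr s).

Lemma merged_ok : divisor_ok iota merged_place merged_deg.
Proof.
case: Q_ok => pQ iQ dQ; split=> [t|t1 t2|t]; rewrite /merged_place /merged_deg.
- by case: (split t) => [j|s]; [apply: pQ|case: (R_rat (enum_val s)) => []].
- case: (split_ordP t1) => [j1|s1] ->; case: (split_ordP t2) => [j2|s2] ->;
    rewrite ?split_lshift ?split_rshift => e.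
  + by rewrite (iQ _ _ e).
  + by move: (enum_valP s2) => /decbP/(_ j1); rewrite e.
  + by move: (enum_valP s1) => /decbP/(_ j2); rewrite e.
  + by rewrite (enum_val_inj (R_inj e)).
- by case: (split t) => [j|s]; [apply: dQ|case: (R_rat (enum_val s))].
Qed.

Lemma divisor_merged w : place w ->
  divisor merged_place merged_mult w = divisor Q m w + divisor R c w.
Proof.
have [_ iQ _] := Q_ok; have [_ iP _] := merged_ok; move=> hw.
case: (classic (exists j, w = Q j)) => [[j ->]|nj].
  have e : Q j = merged_place (lshift K' j) by rewrite /merged_place split_lshift.
  by rewrite {1}e divisor_at // /merged_mult split_lshift divisor_at.
rewrite (divisor_out m) => [|j e]; last by apply: nj; exists j.
case: (classic (exists i, w = R i)) => [[i wi]|ni].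
  subst w.
  have Ri : i \in R_new by rewrite inE; apply/decbP => j e; apply: nj; exists j.
  have e : R i = merged_place (rshift k (enum_rank_in Ri i)).
    by rewrite /merged_place split_rshift enum_rankK_in.
  by rewrite {1}e divisor_at // /merged_mult split_rshift enum_rankK_in // divisor_at // add0r.
rewrite (divisor_out c) => [|i e]; last by apply: ni; exists i.
apply: divisor_out => t; rewrite /merged_place; case: (split t) => [j|s] e.
  by apply: nj; exists j.
by apply: ni; exists (enum_val s).
Qed.

(* A place of R that is also a place of Q has degree 1 on both sides, so its
   multiplicity can be transferred to Q without changing the degree. *)
Lemma merged_degree :
  \sum_t merged_mult t * (merged_deg t)%:Z = \sum_j m j * (d j)%:Z + \sum_i c i.
Proof.
have [pQ iQ dQ] := Q_ok.
have R_Q_deg i j : R i = Q j -> d j = 1%N.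
  move=> e; apply: (rational_place_degree (R_rat i)); rewrite e; exact: dQ.
have R_count i : \sum_j place_ind (R i) (Q j) = (i \notin R_new)%:R.
  rewrite (eq_bigr (fun j => 1 * place_ind (Q j) (R i))) => [|j _]; last first.
    by rewrite mul1r place_indC.
  case: (boolP (i \in R_new)) => [/decbP h|/decbP h]; first by apply: divisor_out.
  have [j ->] : exists j, R i = Q j.
    by apply: NNPP => h'; apply: h => j e; apply: h'; exists j.
  exact: divisor_at.
rewrite big_split_ord /= (bigID (fun i => i \in R_new) _ c) /= [RHS]addrCA [RHS]addrC.
congr (_ + _); last first.
  rewrite (big_enum_val (A := R_new)); apply: eq_bigr => s _.
  by rewrite /merged_mult /merged_deg split_rshift mulr1.
rewrite (eq_bigr (fun j => m j * (d j)%:Z + \sum_i c i * place_ind (R i) (Q j))).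
  rewrite big_split /= exchange_big /=; congr (_ + _).
  rewrite [RHS]big_mkcond; apply: eq_bigr => i _.
  by rewrite -mulr_sumr R_count; case: (i \in R_new); rewrite ?mulr0 ?mulr1.
move=> j _; rewrite /merged_mult /merged_deg split_lshift mulrDl; congr (_ + _).
rewrite mulr_suml; apply: eq_bigr => i _; rewrite /place_ind; case: decbP => e.
  by rewrite (R_Q_deg i j (esym e)) !mulr1.
by rewrite !mulr0 mul0r.
Qed.

End MergeDivisors.

Section GenusBound.
Variables (F : finFieldType) (E : fieldType) (iota : {rmorphism F -> E}) (g : nat).
Local Notation place := (is_place iota).
Hypothesis genus : is_genus iota g.

Lemma Lspace_genus_bound k (Q : 'I_k -> E -> int) (d : 'I_k -> nat) K (R : 'I_K -> E -> int)
    m c D n : divisor_ok iota Q d -> injective R -> (forall i, rational_place iota (R i)) ->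
  (forall w, place w -> D w = divisor Q m w + divisor R c w) ->
  has_dim iota (Lspace iota D) n ->
  \sum_j m j * (d j)%:Z + \sum_i c i + 1 - n%:Z <= g%:Z.
Proof.
move=> Q_ok R_inj R_rat eD hn; rewrite -(merged_degree m c Q_ok R_rat).
have P_ok := merged_ok Q_ok R_inj R_rat; apply: (genus.1 _ _ _ _ _ P_ok).
apply: has_dim_ext hn => x; rewrite LRR_Lspace; last by case: P_ok.
by apply: Lspace_ext => w hw; rewrite eD // (divisor_merged m c Q_ok R_inj R_rat hw).
Qed.

End GenusBound.

Lemma is_burst_window (F : fieldType) N b (e : 'rV[F]_N) a :
  (forall k : 'I_N, e ord0 k != 0 -> (a <= k < a + b)%N) -> is_burst b e.
Proof.
move=> h; case: (classic (exists k, e ord0 k != 0)) => [[k0 hk0]|nk]; last first.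
  left; apply/rowP => k; rewrite mxE; apply/eqP; apply: NNPP => hk; apply: nk.
  by exists k; apply/negP.
right.
have [i hi mi] := @arg_minnP _ k0 (fun k => e ord0 k != 0) (@nat_of_ord N) hk0.
have [j hj mj] := @arg_maxnP _ k0 (fun k => e ord0 k != 0) (@nat_of_ord N) hk0.
exists i, j; split => // [k hk|]; first by have := mi k hk; have := mj k hk; lia.
by have := h i hi; have := h j hj; lia.
Qed.

Lemma is_burst_halves (F : fieldType) N t (c : 'rV[F]_N) :
  (forall j : 'I_N, c ord0 j != 0 -> (j < 2 * t)%N) ->
  let r := \row_j (if (j < t)%N then c ord0 j else 0) in
  is_burst t (r - 0) /\ is_burst t (r - c).
Proof.
move=> hc r; split.
  by apply: (is_burst_window (a := 0)) => j; rewrite !mxE subr0; case: ifP; rewrite ?eqxx.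
apply: (is_burst_window (a := t)) => j; rewrite !mxE; case: ifP => [|ht].
  by rewrite subrr eqxx.
by rewrite sub0r oppr_eq0 => /hc; move: ht; lia.
Qed.

Lemma sum_ord_geq (N w : nat) : (\sum_(j < N) (w <= j)%N)%N = (N - w)%N.
Proof.
elim: N => [|N IH]; first by rewrite big_ord0.
by rewrite big_ord_recr /= IH; case: (leqP w N) => h; lia.
Qed.

Section TailVanishing.
Variables (F : finFieldType) (E : fieldType) (iota : {rmorphism F -> E}).
Variables (g N lam : nat) (P : 'I_N -> E -> int) (Pinf : E -> int).
Hypothesis genus : is_genus iota g.
Hypothesis P_rat : forall i, rational_place iota (P i).
Hypothesis Pinf_rat : rational_place iota Pinf.
Hypothesis P_inj : injective P.
Hypothesis P_Pinf : forall i, P i <> Pinf.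
Hypothesis g_le_lam : (g <= lam)%N.
Hypothesis lam_lt_N : (lam < N)%N.
Local Notation place := (is_place iota).
Local Notation Lspace := (Lspace iota).

Definition PinfP (i : 'I_N.+1) := if unlift ord0 i is Some j then P j else Pinf.

Lemma PinfP_inj : injective PinfP.
Proof.
move=> i1 i2; rewrite /PinfP.
case: unliftP => [j1 ->|->]; case: unliftP => [j2 ->|->] // e.
- by rewrite (P_inj e).
- by case: (P_Pinf e).
- by case: (P_Pinf (esym e)).
Qed.

Lemma PinfP_rat i : rational_place iota (PinfP i).
Proof. by rewrite /PinfP; case: unlift. Qed.

Lemma divisor_PinfP c w :
  divisor PinfP c w = c ord0 * place_ind Pinf w + divisor P (fun j => c (lift ord0 j)) w.
Proof.
rewrite /divisor big_ord_recl /PinfP unlift_none; congr (_ + _).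
by apply: eq_bigr => j _; rewrite liftK.
Qed.

Let P_pd j : place (P j) /\ place_degree iota (P j) 1 := P_rat j.

(* A nonzero f with (f) >= sum P_j - lam P_inf would embed L(A0 + sum P_j),
   of dimension >= l(A0) + N by Riemann's inequality, into L(A0 + lam P_inf),
   of dimension <= l(A0) + lam. *)
Lemma Lspace_sub_all_eq0 f :
  Lspace (fun w => lam%:Z * place_ind Pinf w - divisor P (fun _ => 1) w) f -> f = 0.
Proof.
move=> hf; apply: NNPP => /eqP f0.
have [_ [k [Q [m0 [d0 [n0 [Q_ok L_A0 A0_genus]]]]]]] := genus.
have {}A0_genus : \sum_i m0 i * (d0 i)%:Z + 1 - n0%:Z = g%:Z := A0_genus.
have [_ Q_inj _] := Q_ok.
have spans_A0 : spans iota (Lspace (divisor Q m0)) n0.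
  by apply: has_dim_spans; apply: has_dim_ext L_A0 => x; apply: LRR_Lspace.
have [n1 _ dim1] := spans_has_dim (Lspace_subspace _ _)
  (spans_Lspace_add_sum (index_enum 'I_N) (fun _ => 1%N) P_pd spans_A0).
have n1_ge : (n0 + N <= n1)%N.
  pose c (i : 'I_N.+1) : int := if unlift ord0 i is Some _ then 1 else 0.
  have eD w : place w -> divisor Q m0 w + \sum_(j < N) 1 * place_ind (P j) w =
                         divisor Q m0 w + divisor PinfP c w.
    move=> _; rewrite divisor_PinfP /c unlift_none mul0r add0r; congr (_ + _).
    by apply: eq_bigr => j _; rewrite liftK.
  have := Lspace_genus_bound genus Q_ok PinfP_inj PinfP_rat eD dim1.
  have -> : \sum_i c i = N%:Z.
    rewrite big_ord_recl /c unlift_none add0r (eq_bigr (fun _ => 1)) => [|j _].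
      by rewrite sumr_const card_ord natz.
    by rewrite liftK.
  by move: A0_genus; lia.
have spans_A0_lam : spans iota (Lspace (fun w =>
    (lam%:Z * place_ind Pinf w - divisor P (fun _ => 1) w) +
    (divisor Q m0 w + \sum_(j < N) 1 * place_ind (P j) w))) (lam * 1 + n0).
  apply: spans_ext (spans_Lspace_addn lam (proj1 Pinf_rat) (proj2 Pinf_rat) spans_A0) => x.
  by apply: Lspace_ext => w _; rewrite /divisor; ring.
by have := indep_spans_leq (Lspace_mul_indep f0 hf dim1) spans_A0_lam; lia.
Qed.

Definition tail_start := (N - lam + g)%N.

Definition tail_divisor w : int :=
  lam%:Z * place_ind Pinf w - divisor P (fun j => (tail_start <= j)%N%:Z) w.

(* If L(lam P_inf - sum_{j >= tail_start} P_j) were 0, then L(lam P_inf) would be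
   spanned by N - tail_start = lam - g elements, against Riemann's inequality. *)
Lemma exists_tail_vanishing : exists2 f, f != 0 & Lspace tail_divisor f.
Proof.
apply: NNPP => nf.
have spans0 : spans iota (Lspace tail_divisor) 0.
  exists (fun _ => 0); split=> [[]//|x hx]; exists (fun _ => 0).
  by rewrite /lincomb big_ord0; apply: NNPP => x0; apply: nf; exists x => //; apply/eqP.
have [n n_le dimn] := spans_has_dim (Lspace_subspace _ _)
  (spans_Lspace_add_sum (index_enum 'I_N) (fun j => (tail_start <= j)%N) P_pd spans0).
have Q0_ok : divisor_ok iota (fun _ : 'I_0 => Pinf) (fun _ => 0%N) by split=> [[]|[]|[]].
pose c (i : 'I_N.+1) : int := if unlift ord0 i is Some _ then 0 else lam%:Z.
have eD w : place w -> tail_divisor w + \sum_(j < N) (tail_start <= j)%N%:Z * place_ind (P j) w =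
                       divisor (fun _ : 'I_0 => Pinf) (fun _ => 0) w + divisor PinfP c w.
  move=> _; rewrite divisor_PinfP /c unlift_none /divisor big_ord0 add0r /tail_divisor.
  by rewrite subrK big1 ?addr0 // => j _; rewrite liftK mul0r.
have := Lspace_genus_bound genus Q0_ok PinfP_inj PinfP_rat eD dimn.
rewrite big_ord0 big_ord_recl /c unlift_none big1 => [|j _]; last by rewrite liftK.
move: n_le; rewrite (eq_bigr _ (fun j _ => muln1 _)) sum_ord_geq /tail_start; lia.
Qed.

Lemma tail_divisor_Pinf : tail_divisor Pinf = lam%:Z.
Proof.
by rewrite /tail_divisor place_ind_id divisor_out ?mulr1 ?subr0 // => j /esym /P_Pinf.
Qed.

Lemma tail_divisor_P j : tail_divisor (P j) = - (tail_start <= j)%N%:Z.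
Proof. by rewrite /tail_divisor place_ind_ne ?mulr0 ?add0r ?divisor_at. Qed.

Lemma tail_divisor_le0 w : w <> Pinf -> tail_divisor w <= 0.
Proof.
move=> wP; case: (classic (exists j, w = P j)) => [[j ->]|nj].
  by rewrite tail_divisor_P; case: (tail_start <= j)%N.
rewrite /tail_divisor place_ind_ne // divisor_out ?mulr0 ?subr0 // => j e.
by apply: nj; exists j.
Qed.

Lemma Lspace_tail_L_multiple f : Lspace tail_divisor f -> L_multiple iota Pinf lam f.
Proof.
case=> [->|hf]; [by left|right; split=> [|w hw wP]].
  by have := hf _ (proj1 Pinf_rat); rewrite tail_divisor_Pinf.
by have := hf _ hw; have := tail_divisor_le0 wP; lia.
Qed.

Lemma Lspace_tail_inO f (j : 'I_N) : Lspace tail_divisor f -> inO (P j) f.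
Proof.
by case=> [->|hf]; [left|right; have := hf _ (proj1 (P_rat j)); rewrite tail_divisor_P; lia].
Qed.

Lemma Lspace_tail_inM f (j : 'I_N) : Lspace tail_divisor f -> (tail_start <= j)%N -> inM (P j) f.
Proof.
move=> [->|hf] hj; [by left|right].
by have := hf _ (proj1 (P_rat j)); rewrite tail_divisor_P hj.
Qed.

Lemma L_multiple_inM_eq0 f : L_multiple iota Pinf lam f -> (forall j, inM (P j) f) -> f = 0.
Proof.
move=> [//|[fPinf f_pos]] f_inM; apply: Lspace_sub_all_eq0.
have [->|f0] := eqVneq f 0; [by left|right => w hw].
have [->|wP] := classic (w = Pinf).
  by rewrite place_ind_id divisor_out ?mulr1 ?subr0 // => j /esym /P_Pinf.
rewrite place_ind_ne // mulr0 add0r opprK.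
case: (classic (exists j, w = P j)) => [[j ->]|nj].
  by rewrite divisor_at //; case: (f_inM j) => [f_eq0|]; [rewrite f_eq0 eqxx in f0|lia].
by rewrite divisor_out => [|j e]; [apply: f_pos|apply: nj; exists j].
Qed.

Lemma exists_tail_vanishing_codeword : exists c : 'rV[F]_N,
  [/\ AG_code iota P Pinf lam c, c != 0 & forall j : 'I_N, c ord0 j != 0 -> (j < tail_start)%N].
Proof.
have [f f0 hf] := exists_tail_vanishing.
have [ev hev] : exists ev : 'I_N -> F, forall j, evals_to iota (P j) f (ev j).
  by apply: (@fin_all_exists _ (fun=> F) (fun j a => evals_to iota (P j) f a)) => j; exact: evals_to_exists (P_rat j) _ (Lspace_tail_inO j hf).
exists (\row_j ev j); split.
- by exists f; split=> [|j]; [apply: Lspace_tail_L_multiple|rewrite mxE].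
- apply: contraNneq f0 => /rowP c0.
  apply/eqP; apply: (L_multiple_inM_eq0 (Lspace_tail_L_multiple hf)) => j.
  by have [_] := hev j; have := c0 j; rewrite !mxE => ->; rewrite rmorph0 subr0.
- move=> j; rewrite mxE; apply: contraNT; rewrite -leqNgt => hj.
  by rewrite (evals_to_inM (P_rat j) (hev j) (Lspace_tail_inM hf hj)).
Qed.

End TailVanishing.

Lemma AG_code0 (F : finFieldType) (E : fieldType) (iota : {rmorphism F -> E}) N
    (P : 'I_N -> E -> int) Pinf lam : AG_code iota P Pinf lam 0.
Proof. by exists 0; split=> [|j]; [left|rewrite mxE; split; [left|rewrite rmorph0 subr0; left]]. Qed.

Unset Implicit Arguments.

Theorem mainTheorem7 (F : finFieldType) (E : fieldType) (iota : {rmorphism F -> E})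
  (g N lam : nat) (P : 'I_N -> E -> int) (Pinf : E -> int) :
  function_field iota -> full_constant_field iota -> is_genus iota g ->
  (forall i, rational_place iota (P i)) -> rational_place iota Pinf ->
  injective P -> (forall i, P i <> Pinf) ->
  (g <= lam)%N -> (lam < N)%N ->
  let t := (1 + (N - lam + g - 1) %/ 2)%N in
  exists (r c1 c2 : 'rV[F]_N),
    [/\ AG_code iota P Pinf lam c1, AG_code iota P Pinf lam c2, c1 <> c2,
        is_burst t (r - c1) & is_burst t (r - c2)].
Proof.
move=> _ _ genus P_rat Pinf_rat P_inj P_Pinf g_le_lam lam_lt_N t.
have [c [c_code c_neq0 c_supp]] :=
  exists_tail_vanishing_codeword genus P_rat Pinf_rat P_inj P_Pinf g_le_lam lam_lt_N.
have c_half j : c ord0 j != 0 -> (j < 2 * t)%N by move/c_supp; rewrite /tail_start /t; lia.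
have [burst0 burst_c] := is_burst_halves c_half.
exists (\row_j (if (j < t)%N then c ord0 j else 0)), 0, c; split=> //.
- exact: AG_code0.
- by move=> c0; rewrite -c0 eqxx in c_neq0.
Qed.
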